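(* Let $(Z_n)_{n\ge0}$ be a linear fractional Galton–Watson process in i.i.d. random environment (as in the context) which is supercritical, i.e. $R_\infty<\infty=R^{(-1)}_\infty$ a.s. Then $$\frac{1}{1-q(\mathbf{e})}=R_\infty\in[1,\infty)\quad\text{a.s.},$$ in particular $q(\mathbf{e})<1$ a.s. Furthermore, $$\lim_{n\to\infty}\frac{1}{\Pi_n}\Big(\frac{1}{R_n}-\mathbf{P}(Z_n>0)\Big)=\frac{1}{R_\infty^2}\quad\text{a.s.}$$
   Context: Let $(A_n,B_n)_{n\ge1}$ be i.i.d. copies of $(A,B)$ with $\mathbb{P}(A>0,B>0,A+B\ge1)=1$; $\mathbf{e}=(A_n,B_n)_{n\ge1}$. For $a,b>0$, $a+b\ge1$, $LF(a,b)$ is the distribution on $\mathbb{N}_0$ whose generating function $f$ satisfies $1/(1-f(s))=a/(1-s)+b$, $s\in[0,1)$. $(Z_n)$, $Z_0=1$: given $\mathbf{e}$, each individual of generation $k-1$ independently has offspring law $LF(A_k,B_k)$. $\mathbf{P}=\mathbb{P}(\cdot\mid\mathbf{e})$, and $q(\mathbf{e})=\lim_{n\to\infty}\mathbb{P}(Z_n=0\mid A_1,B_1,\dots,A_n,B_n)$ is the quenched extinction probability. $\Pi_0=1$, $\Pi_n=\prod_{k=1}^nA_k$, $R_n=\sum_{k=1}^n\Pi_{k-1}B_k$, $R_\infty=\lim R_n$, $R^{(-1)}_\infty=\sum_{k\ge1}\Pi_k^{-1}B_k$. *)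

From HB Require Import structures.
From mathcomp Require Import all_boot all_order all_algebra.
From mathcomp Require Import all_classical all_reals all_analysis.
Set Implicit Arguments. Unset Strict Implicit. Unset Printing Implicit Defensive.
Import Order.TTheory GRing.Theory Num.Theory.
Import numFieldNormedType.Exports.
Local Open Scope classical_set_scope.
Local Open Scope ring_scope.

Section LFGW.
Context {R : realType}.

Definition rseries (m : nat) (u : nat -> R) : R :=
  limn (fun n => \sum_(m <= k < n) u k).

Definition is_pmf (p : nat -> R) : Prop :=
  (forall k, 0 <= p k) /\ ((fun n : nat => \sum_(0 <= k < n) p k) @ \oo --> (1 : R)).

Definition genfun (p : nat -> R) (s : R) : R := rseries 0 (fun k => p k * s ^+ k).

Definition is_LF (a b : R) (p : nat -> R) : Prop :=
  is_pmf p /\ forall s : R, 0 <= s < 1 -> 1 / (1 - genfun p s) = a / (1 - s) + b.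

Definition conv (p q : nat -> R) (k : nat) : R :=
  \sum_(i < k.+1) p i * q (k - i)%N.
Fixpoint convpow (p : nat -> R) (j : nat) : nat -> R :=
  match j with
  | 0 => fun k => (k == 0%N)%:R
  | j'.+1 => conv p (convpow p j')
  end.

(* Quenched law of Z_n in the (fixed) environment whose generation-k
   offspring law is off k (k >= 1): Z_0 = 1 and, given Z_{n} = j, Z_{n+1} is
   a sum of j independent variables with law off (n+1). *)
Fixpoint gw_law (off : nat -> nat -> R) (n : nat) : nat -> R :=
  match n with
  | 0 => fun k => (k == 1%N)%:R
  | n'.+1 => fun k => rseries 0 (fun j => gw_law off n' j * convpow (off n) j k)
  end.

Definition surv_prob (off : nat -> nat -> R) (n : nat) : R :=
  rseries 1 (gw_law off n).
Definition ext_prob (off : nat -> nat -> R) : R :=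
  limn (fun n => gw_law off n 0%N).

(* Environment functionals; A k, B k are meaningful for k >= 1. *)
Definition Pi (A : nat -> R) (n : nat) : R := \prod_(1 <= k < n.+1) A k.
Definition Rn (A B : nat -> R) (n : nat) : R :=
  \sum_(1 <= k < n.+1) Pi A k.-1 * B k.
Definition Rinf (A B : nat -> R) : \bar R :=
  (\sum_(1 <= k <oo) (Pi A k.-1 * B k)%:E)%E.
Definition Rinf_inv (A B : nat -> R) : \bar R :=
  (\sum_(1 <= k <oo) ((Pi A k)^-1 * B k)%:E)%E.

End LFGW.


(* (A_k, B_k)_{k >= 1} are i.i.d. random pairs on the probability space P:
   each A_k, B_k is measurable, and for every finite set s of indices >= 1
   and Borel sets U_k, V_k,
   P(forall k in s, A_k in U_k and B_k in V_k)
     = prod_{k in s} P(A_1 in U_k and B_1 in V_k).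
   (independence of the pairs + each pair distributed as (A_1,B_1);
    rectangles form a pi-system generating the Borel sets of R^2.) *)
Definition iid_pairs {R : realType} {d : measure_display} {T : measurableType d}
  (P : probability T R) (A B : nat -> T -> R) : Prop :=
  (forall k, (1 <= k)%N ->
     measurable_fun setT (A k) /\ measurable_fun setT (B k)) /\
  forall (s : seq nat) (U V : nat -> set R),
    uniq s -> all (fun k => 1 <= k)%N s ->
    (forall k, measurable (U k)) -> (forall k, measurable (V k)) ->
    P [set w | forall k, k \in s -> U k (A k w) /\ V k (B k w)] =
    (\prod_(k <- s) P [set w | U k (A 1%N w) /\ V k (B 1%N w)])%E.

From Pilot Require Import Defs.
From HB Require Import structures.
From mathcomp Require Import all_boot all_order all_algebra.
From mathcomp Require Import all_classical all_reals all_analysis.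
From mathcomp Require Import ring lra measurable_realfun.
Import Order.TTheory GRing.Theory Num.Theory.
Import numFieldNormedType.Exports.
Local Open Scope classical_set_scope.
Local Open Scope ring_scope.

(* For fixed parameters the generating function of LF(a, b) is the Moebius map
   s |-> 1 - (1 - s) / (a + b (1 - s)), and these maps compose as
   LF(a, b) o LF(a', b') = LF(a a', b + a b').  Hence, in a fixed environment,
   Z_n has the generating function of LF(Pi_n, R_n):
   P(Z_n = 0) = 1 - 1/(Pi_n + R_n) and P(Z_n > 0) = 1/(Pi_n + R_n).
   Since A + B >= 1, Pi_n + R_n is nondecreasing and at least 1.  R_n increases
   to R_oo < oo, and Pi_n -> 0: a bound Pi_k >= c > 0 for large k would give
   B_k / Pi_k <= Pi_{k-1} B_k / c^2, making R^(-1)_oo finite.  So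
   1/(1 - q) = lim (Pi_n + R_n) = R_oo, and
   (1/R_n - P(Z_n > 0)) / Pi_n = 1/(R_n (Pi_n + R_n)) -> 1/R_oo^2.
   The support condition on (A_1, B_1) holds for every (A_k, B_k) a.s. because
   the pairs are identically distributed. *)

Section nonnegative_series.
Context {R : realType}.
Local Open Scope ereal_scope.
Implicit Types (u : nat -> R) (f : nat -> \bar R).

Lemma eseries_EFin_cvg u m l : (forall k, (m <= k)%N -> (0 <= u k)%R) ->
  \sum_(m <= k <oo) (u k)%:E = l%:E ->
  (\sum_(m <= k < n) u k)%R @[n --> \oo] --> l.
Proof.
move=> u0 ul.
have := @is_cvg_nneseries R (fun k => (u k)%:E) xpredT m (fun k mk _ => u0 k mk).
rewrite ul => /fine_cvg; apply: cvg_trans; apply: near_eq_cvg.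
by near=> n; rewrite /= sumEFin.
Unshelve. all: by end_near.
Qed.

Lemma cvg_eseries_EFin u m l : (\sum_(m <= k < n) u k)%R @[n --> \oo] --> l ->
  \sum_(m <= k <oo) (u k)%:E = l%:E.
Proof.
move=> ul; have -> : (fun n => \sum_(m <= k < n) (u k)%:E) =
                    EFin \o (fun n => (\sum_(m <= k < n) u k)%R).
  by apply/funext => n /=; rewrite sumEFin.
by rewrite EFin_lim ?(cvg_lim _ ul) //; apply/cvg_ex; exists l.
Qed.

Lemma rseries_nneseries u m l : (forall k, (m <= k)%N -> (0 <= u k)%R) ->
  \sum_(m <= k <oo) (u k)%:E = l%:E -> rseries m u = l.
Proof. by move=> u0 ul; apply/cvg_lim => //; exact: eseries_EFin_cvg. Qed.

Lemma nneseries_single f (j : nat) : (forall k, 0 <= f k) ->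
  (forall k, k != j -> f k = 0) -> \sum_(0 <= k <oo) f k = f j.
Proof.
move=> f0 fj; rewrite (@nneseriesD1 _ _ j xpredT) // eseries0 ?adde0 //.
by move=> k _ /fj.
Qed.

Lemma nneseries_ge_term f (j : nat) : (forall k, 0 <= f k) ->
  f j <= \sum_(0 <= k <oo) f k.
Proof.
by move=> f0; rewrite (@nneseriesD1 _ _ j xpredT) // leeDl // nneseries_ge0.
Qed.

Lemma nneseries_truncate f n : (forall k, 0 <= f k) ->
  \sum_(0 <= k <oo) (if (k < n)%N then f k else 0) = \sum_(0 <= k < n) f k.
Proof.
move=> f0; rewrite (nneseries_split 0 n); last by move=> k _; case: ifP.
rewrite add0n eseries0 ?adde0; last by move=> k nk _; rewrite ltnNge nk.
by apply: eq_big_nat => k /andP[_ ->].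
Qed.

Lemma nneseries_shift f i : (forall k, 0 <= f k) ->
  \sum_(0 <= k <oo) (if (i <= k)%N then f (k - i)%N else 0) =
  \sum_(0 <= k <oo) f k.
Proof.
move=> f0; rewrite (nneseries_split 0 i); last by move=> k _; case: ifP.
rewrite add0n big1_seq ?add0e; last first.
  by move=> k; rewrite mem_index_iota ltnNge => /andP[_ /negbTE ->].
rewrite -nneseries_addn; last by move=> k; case: ifP.
by apply: eq_eseriesr => k _; rewrite leq_addl addnK.
Qed.

Lemma nneseries_lt_pinfty_dominated u (v : nat -> R) N m (K : R) :
  (forall k, (N <= k)%N -> (0 <= u k)%R) ->
  (forall k, (N <= k)%N -> (0 <= v k)%R) -> (0 <= K)%R ->
  (forall k, (m <= k)%N -> (v k <= K * u k)%R) ->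
  \sum_(N <= k <oo) (u k)%:E < +oo -> \sum_(N <= k <oo) (v k)%:E < +oo.
Proof.
move=> u0 v0 K0 vKu.
have u0' k : (N <= k)%N -> 0 <= (u k)%:E by move/u0; rewrite lee_fin.
have v0' k : (N <= k)%N -> 0 <= (v k)%:E by move/v0; rewrite lee_fin.
have Nm k : (N + m <= k)%N -> (N <= k)%N by apply: leq_trans; rewrite leq_addr.
rewrite (nneseries_split N m u0') (nneseries_split N m v0') => ufin.
have tail_u : \sum_(N + m <= k <oo) (u k)%:E < +oo.
  move: ufin; apply: le_lt_trans; rewrite leeDr // big_nat_cond.
  by apply: sume_ge0 => k /andP[/andP[Nk _] _]; exact: u0'.
have tail_v : \sum_(N + m <= k <oo) (v k)%:E <=
              K%:E * \sum_(N + m <= k <oo) (u k)%:E.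
  rewrite !(eseries_cond _ _ (N + m)) -nneseriesZl; last by move=> k /Nm /u0'.
  apply: lee_nneseries => [k _ /Nm|k /= mk]; first exact: v0'.
  by rewrite -EFinM lee_fin vKu // (leq_trans _ mk) // leq_addl.
rewrite sumEFin lte_add_pinfty ?ltry // (le_lt_trans tail_v) //.
have ufin_tail : \sum_(N + m <= k <oo) (u k)%:E \is a fin_num.
  by rewrite ge0_fin_numE // nneseries_ge0 // => k /Nm /u0'.
by rewrite -(fineK ufin_tail) -EFinM ltry.
Qed.

End nonnegative_series.

Section generating_functions.
Context {R : realType}.
Local Open Scope ereal_scope.
Implicit Types (p q g : nat -> R) (s t x : R).

(* Unlike the real limit [genfun], this series always has a value for
   nonnegative terms, so double sums can be interchanged freely. *)
Definition egenfun p s : \bar R := \sum_(0 <= k <oo) (p k * s ^+ k)%:E.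

Lemma egenfun_term_ge0 p s k : (forall k, (0 <= p k)%R) -> (0 <= s)%R ->
  0 <= (p k * s ^+ k)%:E.
Proof. by move=> p0 s0; rewrite lee_fin mulr_ge0 // exprn_ge0. Qed.

Lemma egenfun_ge0 p s : (forall k, (0 <= p k)%R) -> (0 <= s)%R ->
  0 <= egenfun p s.
Proof. by move=> p0 s0; apply: nneseries_ge0 => k _ _; exact: egenfun_term_ge0. Qed.

Lemma egenfun0 p : (forall k, (0 <= p k)%R) -> egenfun p 0 = (p 0%N)%:E.
Proof.
move=> p0; rewrite /egenfun (nneseries_single _ 0%N).
- by rewrite expr0 mulr1.
- by move=> k; exact: egenfun_term_ge0.
- by move=> k k0; rewrite expr0n (negbTE k0) mulr0.
Qed.

Lemma egenfun_delta (j : nat) s : (0 <= s)%R ->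
  egenfun (fun k => (k == j)%:R) s = (s ^+ j)%:E.
Proof.
move=> s0; rewrite /egenfun (nneseries_single _ j) ?eqxx ?mul1r //.
- by move=> k; rewrite lee_fin mulr_ge0 ?ler0n ?exprn_ge0.
- by move=> k /negbTE ->; rewrite mul0r.
Qed.

Lemma egenfun_le1 p s : (forall k, (0 <= p k)%R) -> egenfun p 1 = 1 ->
  (0 <= s <= 1)%R -> egenfun p s <= 1.
Proof.
move=> p0 p1 /andP[s0 s1]; rewrite -p1.
apply: lee_nneseries => [k _ _|k _]; first exact: egenfun_term_ge0.
by rewrite lee_fin expr1n ler_wpM2l // exprn_ile1.
Qed.

Lemma genfun_egenfun p s x : (forall k, (0 <= p k)%R) -> (0 <= s)%R ->
  egenfun p s = x%:E -> genfun p s = x.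
Proof.
by move=> p0 s0; apply: rseries_nneseries => k _; rewrite -lee_fin egenfun_term_ge0.
Qed.

Lemma conv_ge0 p q : (forall k, (0 <= p k)%R) -> (forall k, (0 <= q k)%R) ->
  forall k, (0 <= Defs.conv p q k)%R.
Proof. by move=> p0 q0 k; rewrite sumr_ge0 // => i _; rewrite mulr_ge0. Qed.

Lemma convpow_ge0 p : (forall k, (0 <= p k)%R) ->
  forall j k, (0 <= convpow p j k)%R.
Proof. by move=> p0; elim=> [|j IH] k /=; [rewrite ler0n | exact: conv_ge0]. Qed.

Lemma egenfun_conv p q s x :
  (forall k, (0 <= p k)%R) -> (forall k, (0 <= q k)%R) -> (0 <= s)%R ->
  egenfun q s = x%:E -> egenfun (Defs.conv p q) s = egenfun p s * x%:E.
Proof.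
move=> p0 q0 s0 qx.
pose a i := (p i * s ^+ i)%:E; pose b j := (q j * s ^+ j)%:E.
have a0 i : 0 <= a i by exact: egenfun_term_ge0.
have b0 j : 0 <= b j by exact: egenfun_term_ge0.
have cauchy k : (Defs.conv p q k * s ^+ k)%:E =
    \sum_(0 <= i <oo) (if (i < k.+1)%N then a i * b (k - i)%N else 0).
  rewrite nneseries_truncate => [|i]; last exact: mule_ge0.
  under eq_bigr do rewrite -EFinM; rewrite sumEFin /Defs.conv big_distrl /=.
  rewrite -(big_mkord xpredT (fun i => p i * q (k - i)%N * s ^+ k)%R).
  congr (_%:E); apply: eq_big_nat => i /andP[_ ik].
  by rewrite mulrACA -exprD subnKC // -ltnS.
rewrite /egenfun (eq_eseriesr (fun k _ => cauchy k)).
rewrite nneseries_interchange => [|k i]; last by case: ifP => // _; exact: mule_ge0.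
transitivity (\sum_(0 <= i <oo) a i * x%:E).
  apply: eq_eseriesr => i _; rewrite -qx /egenfun /a.
  rewrite -(nneseries_shift (fun k => (q k * s ^+ k)%:E) i) // -nneseriesZl.
    by apply: eq_eseriesr => k _; rewrite ltnS; case: ifP => // _; rewrite mule0.
  by move=> k _; case: ifP => // _; exact: egenfun_term_ge0.
under eq_eseriesr do rewrite muleC.
by rewrite nneseriesZl // muleC.
Qed.

Lemma egenfun_convpow p s x : (forall k, (0 <= p k)%R) -> (0 <= s)%R ->
  egenfun p s = x%:E -> forall j, egenfun (convpow p j) s = (x ^+ j)%:E.
Proof.
move=> p0 s0 px; elim=> [|j IH] /=; first exact: egenfun_delta.
by rewrite (egenfun_conv _ _ _ _ p0 (convpow_ge0 _ p0 j) s0 IH) px -EFinM exprS.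
Qed.

Definition compound g p (k : nat) : R := rseries 0 (fun j => g j * convpow p j k)%R.

Section compound.
Variables (g p : nat -> R).
Hypotheses (g0 : forall k, (0 <= g k)%R) (p0 : forall k, (0 <= p k)%R).

Lemma egenfun_compound_series s t : (0 <= s)%R -> egenfun p s = t%:E ->
  \sum_(0 <= k <oo) (\sum_(0 <= j <oo) (g j * convpow p j k)%:E) * (s ^+ k)%:E =
  egenfun g t.
Proof.
move=> s0 pt; have c0 := convpow_ge0 _ p0.
transitivity (\sum_(0 <= k <oo) \sum_(0 <= j <oo)
                (g j * (convpow p j k * s ^+ k))%:E).
  apply: eq_eseriesr => k _; rewrite muleC -nneseriesZl => [|j _]; last first.
    by rewrite lee_fin mulr_ge0.
  by apply: eq_eseriesr => j _; rewrite -EFinM; congr (_%:E); ring.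
rewrite nneseries_interchange => [|k j]; last by rewrite lee_fin !mulr_ge0 // exprn_ge0.
apply: eq_eseriesr => j _; under eq_eseriesr do rewrite EFinM.
rewrite nneseriesZl => [|k _]; last exact: egenfun_term_ge0.
by have := egenfun_convpow _ _ _ p0 s0 pt j; rewrite /egenfun => ->; rewrite -EFinM.
Qed.

Hypotheses (g1 : egenfun g 1 = 1) (p1 : egenfun p 1 = 1).

Lemma compound_EFin k :
  (compound g p k)%:E = \sum_(0 <= j <oo) (g j * convpow p j k)%:E.
Proof.
have c0 := convpow_ge0 _ p0.
set D := fun k => \sum_(0 <= j <oo) (g j * convpow p j k)%:E.
have D0 i : 0 <= D i by apply: nneseries_ge0 => j _ _; rewrite lee_fin mulr_ge0.
have D1 : D k <= 1.
  rewrite -g1 -(egenfun_compound_series _ _ ler01 p1).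
  under eq_eseriesr do rewrite expr1n mule1.
  exact: nneseries_ge_term.
have Dfin : D k \is a fin_num by rewrite ge0_fin_numE // (le_lt_trans D1) ?ltry.
rewrite -[RHS]/(D k) -(fineK Dfin); congr (_%:E); apply: rseries_nneseries.
  by move=> j _; rewrite mulr_ge0.
by rewrite fineK.
Qed.

Lemma compound_ge0 k : (0 <= compound g p k)%R.
Proof.
rewrite -lee_fin compound_EFin nneseries_ge0 // => j _ _.
by rewrite lee_fin mulr_ge0 // convpow_ge0.
Qed.

Lemma egenfun_compound s t : (0 <= s)%R -> egenfun p s = t%:E ->
  egenfun (compound g p) s = egenfun g t.
Proof.
move=> s0 pt; rewrite -(egenfun_compound_series _ _ s0 pt).
by apply: eq_eseriesr => k _; rewrite EFinM compound_EFin.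
Qed.

End compound.

End generating_functions.

Section linear_fractional.
Context {R : realType}.
Implicit Types (p : nat -> R) (a b s : R).

Definition lf_pgf (a b s : R) : R := 1 - (1 - s) / (a + b * (1 - s)).

Lemma lf_pgf1 a b : lf_pgf a b 1 = 1.
Proof. by rewrite /lf_pgf subrr mul0r subr0. Qed.

Lemma lf_pgf_comp a b a' b' s : 0 < a -> 0 <= b -> 0 < a' -> 0 <= b' -> s <= 1 ->
  lf_pgf a b (lf_pgf a' b' s) = lf_pgf (a * a') (b + a * b') s.
Proof.
move=> a0 b0 a'0 b'0 s1; have u0 : 0 <= 1 - s by rewrite subr_ge0.
have D' : a' + b' * (1 - s) != 0 by rewrite gt_eqF // ltr_wpDr // mulr_ge0.
have D : a * a' + (b + a * b') * (1 - s) != 0.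
  by rewrite gt_eqF // ltr_wpDr ?mulr_gt0 // mulr_ge0 // addr_ge0 // mulr_ge0 // ltW.
by rewrite /lf_pgf; field; apply/andP.
Qed.

Lemma egenfun_pmf1 p : is_pmf p -> egenfun p 1 = 1%E.
Proof.
case=> _ p1; rewrite /egenfun; under eq_eseriesr do rewrite expr1n mulr1.
exact: cvg_eseries_EFin.
Qed.

Lemma egenfun_lf a b p s : 0 < a -> 0 <= b -> is_LF a b p -> 0 <= s <= 1 ->
  egenfun p s = (lf_pgf a b s)%:E.
Proof.
move=> a0 b0 [pmf lf] /andP[s0 s1]; have [p0 _] := pmf.
have [->|s_neq1] := eqVneq s 1; first by rewrite lf_pgf1 egenfun_pmf1.
have s_lt1 : s < 1 by rewrite lt_neqAle s_neq1.
have le1 : (egenfun p s <= 1)%E by rewrite egenfun_le1 ?egenfun_pmf1 ?s0.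
have fin : egenfun p s \is a fin_num.
  by rewrite ge0_fin_numE ?egenfun_ge0 // (le_lt_trans le1) ?ltry.
rewrite -(fineK fin); congr (_%:E); set g := fine (egenfun p s).
have gf : genfun p s = g by apply: genfun_egenfun; rewrite ?fineK.
have := lf s; rewrite s0 s_lt1 gf => /(_ isT) lfg.
have u0 : 0 < 1 - s by rewrite subr_gt0.
have inv1g : (1 - g)^-1 = (a + b * (1 - s)) / (1 - s).
  by rewrite -div1r lfg; field; rewrite gt_eqF.
by rewrite /lf_pgf -invf_div -inv1g invrK; ring.
Qed.

End linear_fractional.

Section environment.
Context {R : realType}.
Variables (a b : nat -> R).

Lemma Pi0 : Pi a 0 = 1.
Proof. by rewrite /Pi big_geq. Qed.

Lemma Rn0 : Rn a b 0 = 0.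
Proof. by rewrite /Rn big_geq. Qed.

Lemma PiS n : Pi a n.+1 = Pi a n * a n.+1.
Proof. by rewrite /Pi big_nat_recr. Qed.

Lemma RnS n : Rn a b n.+1 = Rn a b n + Pi a n * b n.+1.
Proof. by rewrite /Rn big_nat_recr. Qed.

Hypothesis a_gt0 : forall k, (1 <= k)%N -> 0 < a k.

Lemma Pi_gt0 n : 0 < Pi a n.
Proof. by elim: n => [|n IH]; rewrite ?Pi0 // PiS mulr_gt0 // a_gt0. Qed.

Hypothesis b_ge0 : forall k, (1 <= k)%N -> 0 <= b k.

Lemma Rn_nondecreasing : nondecreasing_seq (Rn a b).
Proof.
by apply/nondecreasing_seqP => n; rewrite RnS lerDl mulr_ge0 ?b_ge0 // ltW ?Pi_gt0.
Qed.

Lemma Rn_ge0 n : 0 <= Rn a b n.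
Proof. by rewrite -Rn0 Rn_nondecreasing. Qed.

End environment.

Section quenched_law.
Context {R : realType}.
Variables (off : nat -> nat -> R) (a b : nat -> R).
Hypothesis lf : forall k, (1 <= k)%N ->
  [/\ 0 < a k, 0 <= b k & is_LF (a k) (b k) (off k)].

Let a_gt0 k : (1 <= k)%N -> 0 < a k. Proof. by case/lf. Qed.
Let b_ge0 k : (1 <= k)%N -> 0 <= b k. Proof. by case/lf. Qed.

Lemma gw_lawS n : gw_law off n.+1 = compound (gw_law off n) (off n.+1).
Proof. by []. Qed.

Lemma egenfun_gw_law n : (forall k, 0 <= gw_law off n k) /\
  forall s, 0 <= s <= 1 ->
    egenfun (gw_law off n) s = (lf_pgf (Pi a n) (Rn a b n) s)%:E.
Proof.
elim: n => [|n [g0 IH]].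
  split=> [k|s /andP[s0 _]]; first by rewrite ler0n.
  rewrite egenfun_delta // Pi0 Rn0 /lf_pgf mul0r addr0 divr1 expr1.
  by congr (_%:E); ring.
have [an bn lfn] := lf n.+1 isT; have [p0 _] := lfn.1.
have g1 : egenfun (gw_law off n) 1 = 1%E by rewrite IH ?lf_pgf1 // ler01 lexx.
have p1 := egenfun_pmf1 _ lfn.1.
split=> [|s s01]; rewrite gw_lawS; first exact: compound_ge0.
have /andP[s0 s1] := s01.
have ps := egenfun_lf _ _ _ _ an bn lfn s01.
have t01 : 0 <= lf_pgf (a n.+1) (b n.+1) s <= 1.
  by rewrite -!lee_fin -ps egenfun_ge0 // egenfun_le1.
rewrite (egenfun_compound _ _ g0 p0 g1 p1 _ _ s0 ps) IH //.
by rewrite lf_pgf_comp ?Pi_gt0 ?Rn_ge0 // -PiS -RnS.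
Qed.

Lemma gw_law_0 n : gw_law off n 0 = 1 - (Pi a n + Rn a b n)^-1.
Proof.
have [g0 gfun] := egenfun_gw_law n.
have := gfun 0; rewrite lexx ler01 egenfun0 // => /(_ isT) [->].
by rewrite /lf_pgf subr0 mulr1 div1r.
Qed.

Lemma surv_prob_eq n : surv_prob off n = (Pi a n + Rn a b n)^-1.
Proof.
have [g0 gfun] := egenfun_gw_law n.
have total : (\sum_(0 <= k <oo) (gw_law off n k)%:E = 1)%E.
  rewrite -(lf_pgf1 (Pi a n) (Rn a b n)) -gfun ?ler01 ?lexx //.
  by apply: eq_eseriesr => k _; rewrite expr1n mulr1.
move: total; rewrite nneseries_recl //; last by move=> k _; rewrite lee_fin.
rewrite addeC => /(congr1 (fun e => e - (gw_law off n 0)%:E)%E).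
rewrite addeK // -EFinB gw_law_0 => tail.
apply: rseries_nneseries => [k _|]; first exact: g0.
by rewrite tail; congr (_%:E); ring.
Qed.

End quenched_law.

Section supercritical_environment.
Context {R : realType}.
Variables (a b : nat -> R).
Hypothesis env : forall k, (1 <= k)%N -> [/\ 0 < a k, 0 <= b k & 1 <= a k + b k].

Let a_gt0 k : (1 <= k)%N -> 0 < a k. Proof. by case/env. Qed.
Let b_ge0 k : (1 <= k)%N -> 0 <= b k. Proof. by case/env. Qed.

Lemma Pi_Rn_nondecreasing : nondecreasing_seq (fun n => Pi a n + Rn a b n).
Proof.
apply/nondecreasing_seqP => n; rewrite PiS RnS.
have [_ _ ab] := env n.+1 isT; have := Pi_gt0 _ a_gt0 n; nra.
Qed.

Lemma Pi_Rn_ge1 n : 1 <= Pi a n + Rn a b n.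
Proof. by have := Pi_Rn_nondecreasing _ _ (leq0n n); rewrite Pi0 Rn0 addr0. Qed.

Lemma Rinf_ge0 : (0 <= Rinf a b)%E.
Proof.
apply: nneseries_ge0 => k k1 _.
by rewrite lee_fin mulr_ge0 ?b_ge0 // ltW ?Pi_gt0.
Qed.

Variable r : R.
Hypothesis Rinf_r : Rinf a b = r%:E.

Lemma Rn_cvg : Rn a b n @[n --> \oo] --> r.
Proof.
have k_ge0 k : (1 <= k)%N -> 0 <= Pi a k.-1 * b k.
  by move=> k1; rewrite mulr_ge0 ?b_ge0 // ltW ?Pi_gt0.
by have := eseries_EFin_cvg _ _ _ k_ge0 Rinf_r; rewrite -cvg_shiftS.
Qed.

Lemma Rn_le n : Rn a b n <= r.
Proof.
rewrite -(cvg_lim _ Rn_cvg) //; apply: nondecreasing_cvgn_le.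
  exact: Rn_nondecreasing.
by apply/cvg_ex; exists r; exact: Rn_cvg.
Qed.

Lemma Pi_lbound m k : (m <= k)%N -> Pi a m + Rn a b m - r <= Pi a k.
Proof.
move=> mk; have := Pi_Rn_nondecreasing _ _ mk; have := Rn_le k; lra.
Qed.

Lemma Rinf_inv_lt_pinfty c m : 0 < c -> (forall k, (m <= k)%N -> c <= Pi a k) ->
  (Rinf_inv a b < +oo)%E.
Proof.
move=> c0 cPi; rewrite /Rinf_inv.
apply: (@nneseries_lt_pinfty_dominated _ _ _ 1 m.+1 (c * c)^-1);
  last by have := ltry r; rewrite -Rinf_r; apply.
- by move=> k k1; rewrite mulr_ge0 ?b_ge0 // ltW ?Pi_gt0.
- by move=> k k1; rewrite mulr_ge0 ?b_ge0 // invr_ge0 ltW ?Pi_gt0.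
- by rewrite invr_ge0 mulr_ge0 // ltW.
move=> k mk; have k1 : (1 <= k)%N by apply: leq_trans mk.
rewrite mulrA ler_wpM2r ?b_ge0 //.
have cPk : c <= Pi a k by apply: cPi; apply: ltnW.
have cPk1 : c <= Pi a k.-1 by apply: cPi; rewrite -ltnS prednK.
apply: (@le_trans _ _ c^-1); first by rewrite lef_pV2 ?posrE ?Pi_gt0.
rewrite invfM -mulrA ler_peMr ?invr_ge0 ?(ltW c0) // mulrC ler_pdivlMr //.
by rewrite mul1r.
Qed.

Hypothesis Rinf_inv_oo : Rinf_inv a b = +oo%E.

Lemma Pi_cvg0 : Pi a n @[n --> \oo] --> 0.
Proof.
have [[m rD]|Dle] := pselect (exists m, r < Pi a m + Rn a b m).
  have c0 : 0 < Pi a m + Rn a b m - r by rewrite subr_gt0.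
  by have := Rinf_inv_lt_pinfty _ _ c0 (Pi_lbound m); rewrite Rinf_inv_oo.
apply: (@squeeze_cvgr _ _ _ _ (cst 0) (fun n => r - Rn a b n)).
- apply: nearW => n; rewrite ltW ?Pi_gt0 //=.
  have : Pi a n + Rn a b n <= r by rewrite leNgt; apply/negP => ?; apply: Dle; exists n.
  lra.
- exact: cvg_cst.
- by rewrite -(subrr r); apply: cvgB; [exact: cvg_cst | exact: Rn_cvg].
Qed.

Lemma Pi_Rn_cvg : Pi a n + Rn a b n @[n --> \oo] --> r.
Proof. by rewrite -[r]add0r; apply: cvgD; [exact: Pi_cvg0 | exact: Rn_cvg]. Qed.

Lemma Rinf_ge1 : 1 <= r.
Proof.
rewrite -(cvg_lim _ Pi_Rn_cvg) //; apply: limr_ge; last exact: nearW Pi_Rn_ge1.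
by apply/cvg_ex; exists r; exact: Pi_Rn_cvg.
Qed.

End supercritical_environment.

Section quenched_supercritical.
Context {R : realType}.
Variables (off : nat -> nat -> R) (a b : nat -> R).
Hypothesis lf : forall k, (1 <= k)%N ->
  [/\ 0 < a k, 0 <= b k, 1 <= a k + b k & is_LF (a k) (b k) (off k)].
Variable r : R.
Hypotheses (Rinf_r : Rinf a b = r%:E) (Rinf_inv_oo : Rinf_inv a b = +oo%E).

Let env k : (1 <= k)%N -> [/\ 0 < a k, 0 <= b k & 1 <= a k + b k].
Proof. by case/lf. Qed.
Let qlaw k : (1 <= k)%N -> [/\ 0 < a k, 0 <= b k & is_LF (a k) (b k) (off k)].
Proof. by case/lf. Qed.
Let r_gt0 : 0 < r.
Proof. exact: lt_le_trans ltr01 (Rinf_ge1 _ _ env _ Rinf_r Rinf_inv_oo). Qed.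

Lemma ext_prob_eq : ext_prob off = 1 - r^-1.
Proof.
apply: cvg_lim => //.
have -> : (fun n => gw_law off n 0) = (fun n => 1 - (Pi a n + Rn a b n)^-1).
  by apply/funext => n; rewrite (gw_law_0 _ _ _ qlaw).
apply: cvgB; first exact: cvg_cst.
by apply: cvgV; [rewrite gt_eqF | exact: Pi_Rn_cvg].
Qed.

Lemma surv_prob_asymptotics :
  (Pi a n)^-1 * ((Rn a b n)^-1 - surv_prob off n) @[n --> \oo] --> r ^-2.
Proof.
have Rn_gt0 := cvgr_gt _ (Rn_cvg _ _ env _ Rinf_r) _ r_gt0.
have a_gt0 k : (1 <= k)%N -> 0 < a k by case/env.
apply: cvg_trans (_ : (Rn a b n * (Pi a n + Rn a b n))^-1 @[n --> \oo] --> r ^-2).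
  apply: near_eq_cvg; near=> n.
  have Pn := Pi_gt0 _ a_gt0 n; have Rn_pos : 0 < Rn a b n by near: n; exact: Rn_gt0.
  rewrite /= (surv_prob_eq _ _ _ qlaw); field.
  by rewrite !gt_eqF ?addr_gt0.
rewrite expr2; apply: cvgV; first by rewrite mulf_neq0 ?gt_eqF.
by apply: cvgM; [exact: Rn_cvg | exact: Pi_Rn_cvg].
Unshelve. all: by end_near.
Qed.

End quenched_supercritical.

Definition lf_admissible {R : realType} (x y : R) := 0 < x /\ 0 < y /\ 1 <= x + y.

Section iid_environment.
Context {R : realType} {d : measure_display} {T : measurableType d}.
Variables (P : probability T R) (A B : nat -> T -> R).
Hypothesis iid : iid_pairs P A B.

Let measurable_rect k (U V : set R) : (1 <= k)%N -> measurable U -> measurable V ->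
  measurable [set w | U (A k w) /\ V (B k w)].
Proof.
move=> k1 mU mV; have [mA mB] := iid.1 k k1.
by apply: measurableI; rewrite -[X in measurable X]setTI; [exact: mA | exact: mB].
Qed.

Lemma iid_pairs_rect k (U V : set R) : (1 <= k)%N -> measurable U -> measurable V ->
  P [set w | U (A k w) /\ V (B k w)] = P [set w | U (A 1%N w) /\ V (B 1%N w)].
Proof.
move=> k1 mU mV.
have k_ge1 : all (fun j => 1 <= j)%N [:: k] by rewrite /= k1.
have := iid.2 [:: k] (fun _ => U) (fun _ => V) isT k_ge1 (fun _ => mU) (fun _ => mV).
rewrite big_seq1 => <-; congr (P _); apply/seteqP; split => w /=.
  by move=> UVw j; rewrite inE => /eqP ->.
by apply; rewrite inE.
Qed.

Lemma measurable_admissible1 : measurable [set w | lf_admissible (A 1%N w) (B 1%N w)].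
Proof.
have [mA mB] := iid.1 1%N isT.
have mpre (f : T -> R) (i : interval R) : measurable_fun setT f ->
    measurable (f @^-1` [set` i]).
  move=> mf; rewrite -[X in measurable X]setTI.
  by apply: mf => //; exact: measurable_itv.
rewrite (_ : [set w | _] = A 1%N @^-1` [set` `]0, +oo[] `&`
    (B 1%N @^-1` [set` `]0, +oo[] `&` (A 1%N \+ B 1%N) @^-1` [set` `[1, +oo[])).
  apply: measurableI; [|apply: measurableI]; apply: mpre => //.
  exact: measurable_funD.
by apply/seteqP; split => w /=; rewrite /lf_admissible !in_itv /= !andbT.
Qed.

Hypothesis admissible1 : P [set w | lf_admissible (A 1%N w) (B 1%N w)] = 1%E.

Let inadmissible1_negligible :
  P.-negligible (~` [set w | lf_admissible (A 1%N w) (B 1%N w)]).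
Proof.
apply/negligibleP; first exact/measurableC/measurable_admissible1.
by have := probability_setC P measurable_admissible1; rewrite admissible1 subee.
Qed.

Lemma inadmissible_rect_negligible k (U V : set R) :
  (1 <= k)%N -> measurable U -> measurable V ->
  (forall x y, U x -> V y -> ~ lf_admissible x y) ->
  P.-negligible [set w | U (A k w) /\ V (B k w)].
Proof.
move=> k1 mU mV UV_inadm.
have null1 : P.-negligible [set w | U (A 1%N w) /\ V (B 1%N w)].
  by apply: negligibleS inadmissible1_negligible => w /= [Uw Vw]; exact: UV_inadm.
have Pk0 : P [set w | U (A k w) /\ V (B k w)] = 0.
  by rewrite iid_pairs_rect // (measure_negligible (measurable_rect 1 _ _ isT mU mV)).
by apply/negligibleP; [exact: measurable_rect | exact: Pk0].
Qed.

Lemma admissible_ae :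
  {ae P, forall w k, (1 <= k)%N -> lf_admissible (A k w) (B k w)}.
Proof.
apply: ae_foralln => k; have [k1|_] := leqP 1 k; last exact: aeW.
have m_lt (c : R) : measurable [set x : R | x < c].
  rewrite (_ : [set x | _] = [set` `]-oo, c[]); first exact: measurable_itv.
  by apply/seteqP; split => x /=; rewrite in_itv.
have m_le0 : measurable [set x : R | x <= 0].
  rewrite (_ : [set x | _] = [set` `]-oo, 0]]); first exact: measurable_itv.
  by apply/seteqP; split => x /=; rewrite in_itv.
have A_le0 : P.-negligible [set w | [set x : R | x <= 0] (A k w) /\ setT (B k w)].
  by apply: inadmissible_rect_negligible => // x y /= x0 _ [x_gt0 _]; lra.
have B_le0 : P.-negligible [set w | setT (A k w) /\ [set y : R | y <= 0] (B k w)].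
  by apply: inadmissible_rect_negligible => // x y /= _ y0 [_ [y_gt0 _]]; lra.
(* {x, y > 0, x + y < 1} is covered by the rectangles x < q, y < 1 - q, q rational. *)
pose rect n : set T := if @unpickle rat n is Some q then
  [set w | [set x | x < ratr q] (A k w) /\ [set y | y < 1 - ratr q] (B k w)]
  else set0.
have small_sum : P.-negligible (\bigcup_n rect n).
  apply: negligible_bigcup => n; rewrite /rect.
  case: (unpickle n) => [q|]; last exact: negligible_set0.
  by apply: inadmissible_rect_negligible => // x y /= xq yq [_ [_ xy]]; lra.
apply: negligibleS (negligibleU (negligibleU A_le0 B_le0) small_sum) => w /= inadm.
have [A0|A0] := leP (A k w) 0; first by left; left.
have [B0|B0] := leP (B k w) 0; first by left; right.
have [AB|AB] := ltP (A k w + B k w) 1; last by exfalso; apply: inadm.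
have AB' : A k w < 1 - B k w by rewrite ltrBrDr.
have [q] := rat_in_itvoo AB'.
rewrite in_itv /= => /andP[Aq qB]; right; exists (pickle q); first by [].
by rewrite /rect pickleK /=; split => //; rewrite ltrBrDr addrC -ltrBrDr.
Qed.

End iid_environment.

Theorem theorem4p1 (R : realType) (d : measure_display) (T : measurableType d)
  (P : probability T R) (A B : nat -> T -> R)
  (off : T -> nat -> nat -> R) :
  iid_pairs P A B ->
  P [set w | 0 < A 1%N w /\ 0 < B 1%N w /\ 1 <= A 1%N w + B 1%N w] = 1%E ->
  (forall w k, (1 <= k)%N -> 0 < A k w -> 0 < B k w -> 1 <= A k w + B k w ->
     is_LF (A k w) (B k w) (off w k)) ->
  {ae P, forall w, Rinf (A ^~ w) (B ^~ w) < +oo /\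
                   Rinf_inv (A ^~ w) (B ^~ w) = +oo}%E ->
  {ae P, forall w,
     ext_prob (off w) < 1 /\
     exists r : R,
       Rinf (A ^~ w) (B ^~ w) = r%:E /\ 1 <= r /\
       (1 - ext_prob (off w))^-1 = r /\
       (fun n => (Pi (A ^~ w) n)^-1 *
                 ((Rn (A ^~ w) (B ^~ w) n)^-1 - surv_prob (off w) n))
         @ \oo --> (r ^-2 : R)}.
Proof.
move=> iid adm1 lf Rinf_ae.
apply: filterS2 (admissible_ae _ _ _ iid adm1) Rinf_ae => w adm [Rinf_fin Rinf_inv_oo].
have env k : (1 <= k)%N -> [/\ 0 < A k w, 0 <= B k w, 1 <= A k w + B k w
                               & is_LF (A k w) (B k w) (off w k)].
  by move=> k1; have [a0 [b0 ab]] := adm k k1; split => //; [exact: ltW | exact: lf].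
have Rr : Rinf (A ^~ w) (B ^~ w) = (fine (Rinf (A ^~ w) (B ^~ w)))%:E.
  by rewrite fineK // ge0_fin_numE // Rinf_ge0 // => k /env[].
set r := fine _ in Rr.
have r1 : 1 <= r by apply: Rinf_ge1 Rr Rinf_inv_oo => k /env[].
have q := ext_prob_eq _ _ _ env _ Rr Rinf_inv_oo.
split; first by rewrite q ltrBlDr ltrDl invr_gt0 (lt_le_trans ltr01 r1).
exists r; do !split => //; first by rewrite q subKr invrK.
exact: surv_prob_asymptotics.
Qed.
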